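(* Suppose $X$ is a Fr\'echet $L$-selective space in which every countable subspace is first countable. Then $X$ is strongly $L$-selective.
   Context: All spaces are assumed $T_1$. For spaces $Y$, $X$, a map $\varphi:Y\to\mathcal P(X)\setminus\{\emptyset\}$ is lower semicontinuous (l.s.c.) if $\{y:\varphi(y)\cap U\neq\emptyset\}$ is open in $Y$ for every open $U\subseteq X$; a selection is a map $f:Y\to X$ with $f(y)\in\varphi(y)$ for all $y$. $X$ is strongly $Y$-selective if every l.s.c. map $Y\to\mathcal P(X)\setminus\{\emptyset\}$ has a continuous selection, and $Y$-selective if every l.s.c. map from $Y$ to the nonempty closed subsets of $X$ has a continuous selection. (Strongly) $L$-selective means (strongly) $(\omega+1)$-selective, with $\omega+1$ carrying the order topology. Fr\'echet means: whenever $x\in\overline A$ there is a sequence in $A$ converging to $x$. *)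

From mathcomp Require Import all_boot all_order.
From mathcomp Require Import all_classical all_reals all_analysis.
Set Implicit Arguments. Unset Strict Implicit. Unset Printing Implicit Defensive.
Local Open Scope classical_set_scope.

(* The space omega+1 with its order topology, modelled on [option nat]:
   [Some n] is the natural number n and [None] is the point omega. *)
Definition omega1 := option nat.

(* Open sets of the order topology of omega+1: every point n < omega is
   isolated, and the basic neighbourhoods of omega are the tails (N, omega]. *)
Definition omega1_open (U : set omega1) : Prop :=
  U None -> exists N : nat, forall n : nat, (N <= n)%N -> U (Some n).

Definition omega1_continuous (X : topologicalType) (f : omega1 -> X) : Prop :=
  forall U : set X, open U -> omega1_open (f @^-1` U).

Definition omega1_lsc (X : topologicalType) (phi : omega1 -> set X) : Prop :=
  forall U : set X, open U -> omega1_open [set y | phi y `&` U !=set0].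

Definition omega1_cont_selection (X : topologicalType)
    (phi : omega1 -> set X) (f : omega1 -> X) : Prop :=
  omega1_continuous f /\ forall y, phi y (f y).

Definition strongly_L_selective (X : topologicalType) : Prop :=
  forall phi : omega1 -> set X,
    (forall y, phi y !=set0) -> omega1_lsc phi ->
    exists f : omega1 -> X, omega1_cont_selection phi f.

Definition L_selective (X : topologicalType) : Prop :=
  forall phi : omega1 -> set X,
    (forall y, phi y !=set0 /\ closed (phi y)) -> omega1_lsc phi ->
    exists f : omega1 -> X, omega1_cont_selection phi f.

Definition frechet_space (X : topologicalType) : Prop :=
  forall (A : set X) (x : X), closure A x ->
    exists u : nat -> X, (forall n, A (u n)) /\ u @ \oo --> x.

(* The subspace A of X is first countable: every point x of A has a countable
   local base in the subspace topology; subspace-open sets are V `&` A with V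
   open in X. *)
Definition subspace_first_countable (X : topologicalType) (A : set X) : Prop :=
  forall x : X, A x ->
    exists B : nat -> set X,
      (forall n, open (B n) /\ B n x) /\
      (forall U : set X, open U -> U x -> exists n, B n `&` A `<=` U `&` A).

Definition countable_subspaces_first_countable (X : topologicalType) : Prop :=
  forall A : set X, countable A -> subspace_first_countable A.

From mathcomp Require Import all_boot all_order.
From mathcomp Require Import all_classical all_reals all_analysis.
Local Open Scope classical_set_scope.

(* Pick x in phi(omega). Replacing phi(n) by its closure and phi(omega) by
   {x} keeps lower semicontinuity and gives closed values, so L-selectivity
   yields a continuous g with g(omega) = x and g(n) in the closure of phi(n).
   By the Frechet property each g(n) is the limit of a sequence s_n in phi(n).
   The countable set of all s_n(k) together with x is first countable at x,
   and a diagonal choice f(n) = s_n(k_n) against a countable base at x makes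
   f(n) converge to x; this f is the required selection. *)

Section OmegaOneSelections.
Context {X : topologicalType}.

Lemma omega1_continuousP (f : omega1 -> X) :
  omega1_continuous f <-> (fun n => f (Some n)) @ \oo --> f None.
Proof.
split=> [fc V|fcvg U oU Uf].
  rewrite nbhsE => -[U [oU Uf] UV].
  have [N HN] := fc U oU Uf.
  by exists N => // n /HN /UV.
have [N _ HN] := fcvg U (open_nbhs_nbhs (conj oU Uf)).
by exists N => n /HN.
Qed.

Lemma omega1_lsc_shrink_top_grow_rest (phi psi : omega1 -> set X) :
  omega1_lsc phi -> psi None `<=` phi None ->
  (forall n, phi (Some n) `<=` psi (Some n)) -> omega1_lsc psi.
Proof.
move=> phic top rest U oU [z [/top phiz Uz]].
have [N HN] := phic U oU (ex_intro _ z (conj phiz Uz)).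
by exists N => n /HN [w [/rest psiw Uw]]; exists w.
Qed.

Lemma L_selective_closure_selection {phi : omega1 -> set X} {x : X} :
  accessible_space X -> L_selective X ->
  (forall y, phi y !=set0) -> omega1_lsc phi -> phi None x ->
  exists g : omega1 -> X, [/\ omega1_continuous g, g None = x &
    forall n, closure (phi (Some n)) (g (Some n))].
Proof.
move=> T1 Lsel phine phic phix.
pose psi y := if y is Some n then closure (phi (Some n)) else [set x].
have psi_closed y : psi y !=set0 /\ closed (psi y).
  case: y => [n|] /=; split.
  - by have [z phiz] := phine (Some n); exists z; exact: subset_closure.
  - exact: closed_closure.
  - by exists x.
  - exact: accessible_closed_set1.
have psic : omega1_lsc psi.
  apply: (@omega1_lsc_shrink_top_grow_rest phi psi phic) => [_ -> //|n].
  exact: subset_closure.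
have [g [gc gsel]] := Lsel psi psi_closed psic.
exists g; split => //; first exact: (gsel None).
by move=> n; exact: (gsel (Some n)).
Qed.

Lemma frechet_sequences {P : nat -> set X} {g : nat -> X} :
  frechet_space X -> (forall n, closure (P n) (g n)) ->
  exists s : nat -> nat -> X,
    (forall n k, P n (s n k)) /\ forall n, s n @ \oo --> g n.
Proof.
move=> Fr Pg.
have [s Hs] := choice (fun n => Fr _ _ (Pg n)).
by exists s; split => n; case: (Hs n).
Qed.

Lemma subspace_first_countable_diagonal {A : set X} {x : X} {g : nat -> X}
    {s : nat -> nat -> X} :
  subspace_first_countable A -> A x -> (forall n k, A (s n k)) ->
  g @ \oo --> x -> (forall n, s n @ \oo --> g n) ->
  exists k : nat -> nat, (fun n => s n (k n)) @ \oo --> x.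
Proof.
move=> /(_ x) + Ax As gx sg => /(_ Ax) [B [oB Bbase]].
have oBg n m : B m (g n) -> nbhs (g n) (B m).
  by move=> Bg; apply: open_nbhs_nbhs; split => //; case: (oB m).
have [k Hk] : {k : nat -> nat &
    forall n (m : 'I_n.+1), B m (g n) -> B m (s n (k n))}.
  apply: (@choice _ _ (fun n kn => forall m : 'I_n.+1, B m (g n) -> B m (s n kn))).
  move=> n; apply: (filter_ex (F := \oo)).
  apply: (sg n [set z | forall m : 'I_n.+1, B m (g n) -> B m z]).
  apply: filter_forall => m.
  case: (pselect (B m (g n))) => [/oBg Bn|nBg].
    by apply: filterS Bn => z Bz _.
  by apply: filterE => z /nBg.
exists k => V; rewrite nbhsE => -[U [oU Ux] UV].
have [m BA] := Bbase U oU Ux.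
have [N _ HN] := gx _ (open_nbhs_nbhs (oB m)).
exists (maxn N m) => // n /=; rewrite geq_max => /andP[Nn mn].
have Bs : B m (s n (k n)).
  by apply: (Hk n (Ordinal (mn : (m < n.+1)%N))); exact: HN.
by have [] := BA _ (conj Bs (As n (k n))); move/UV.
Qed.

End OmegaOneSelections.

Theorem mainTheorem20 (X : topologicalType) :
  @accessible_space X ->
  frechet_space X ->
  L_selective X ->
  countable_subspaces_first_countable X ->
  strongly_L_selective X.
Proof.
move=> T1 Fr Lsel CFC phi phine phic.
have [x phix] := phine None.
have [g [/omega1_continuousP gc gx gsel]] :=
  L_selective_closure_selection T1 Lsel phine phic phix.
have [s [sphi sg]] := frechet_sequences Fr gsel.
pose A := range (fun p : option (nat * nat) =>
  if p is Some (n, k) then s n k else x).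
have cA : countable A by apply: sub_countable (card_image_le _ _) (countableP _).
have Ax : A x by exists None.
have As n m : A (s n m) by exists (Some (n, m)).
have gcx : (fun n => g (Some n)) @ \oo --> x by rewrite -gx.
have [k sk] := subspace_first_countable_diagonal (CFC A cA) Ax As gcx sg.
exists (fun y => if y is Some n then s n (k n) else x); split.
  exact: (omega1_continuousP _).2 sk.
by case=> [n|] //=; exact: sphi.
Qed.
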